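(* For every $k\in\mathbb{N}$ there exists an instance $\mathcal{I}$ of the Strip Packing Problem in which all rectangles are squares, together with an initial ordering of its squares, such that the bottom-left $k$-local search algorithm started from this ordering returns a packing of height $h_{\text{$k$-BL}}(\mathcal{I}) = 2\cdot h_{\text{OPT}}(\mathcal{I})$.
   Context: Strip Packing Problem: given a strip width $W>0$ and rectangles $r_1,\dots,r_n$ with widths $w_i\le W$ and heights $h_i$, a packing assigns to each $r_i$ a lower-left corner $(x_i,y_i)$; it is feasible if $x_i\ge 0$, $x_i+w_i\le W$, $y_i\ge 0$ and the open rectangles $(x_i,x_i+w_i)\times(y_i,y_i+h_i)$ are pairwise disjoint; no rotations. The height of a packing is $\max_i(y_i+h_i)$ and $h_{\text{OPT}}(\mathcal{I})$ is the minimum height of a feasible packing. Bottom-left algorithm: given an ordering, place the first rectangle at $(0,0)$ and then each subsequent rectangle at a feasible position $(x,y)$ (feasible together with those already placed) with $(y,x)$ lexicographically minimal. Bottom-left $k$-local search algorithm: start with an initial ordering and its bottom-left packing. In each iteration (improvement step), look for a new ordering obtained from the current one by permuting at most $k$ rectangles in the ordering such that the bottom-left packing of the new ordering has strictly smaller height; if one exists, replace the current ordering by it. Stop when no such improvement exists (a local optimum). $h_{\text{$k$-BL}}(\mathcal{I})$ denotes the height of the returned packing. *)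

From Stdlib Require Import Reals Lra Lia List Permutation Arith.
Import ListNotations.
Open Scope R_scope.

Record instance := mkInstance {
  W : R;
  n : nat;
  wd : nat -> R;
  ht : nat -> R
}.

Definition valid_instance (I : instance) : Prop :=
  0 < W I /\
  forall i, (i < n I)%nat -> 0 < wd I i /\ wd I i <= W I /\ 0 < ht I i.

Definition all_squares (I : instance) : Prop :=
  forall i, (i < n I)%nat -> wd I i = ht I i.

(** A placement assigns to each rectangle its lower-left corner (x, y). *)
Definition placement := nat -> (R * R).

Definition in_strip (I : instance) (i : nat) (c : R * R) : Prop :=
  0 <= fst c /\ fst c + wd I i <= W I /\ 0 <= snd c.

Definition open_disjoint (I : instance) (i : nat) (ci : R * R)
    (j : nat) (cj : R * R) : Prop :=
  ~ exists a b : R,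
      fst ci < a < fst ci + wd I i /\ snd ci < b < snd ci + ht I i /\
      fst cj < a < fst cj + wd I j /\ snd cj < b < snd cj + ht I j.

Definition feasible (I : instance) (p : placement) : Prop :=
  (forall i, (i < n I)%nat -> in_strip I i (p i)) /\
  (forall i j, (i < n I)%nat -> (j < n I)%nat -> i <> j ->
     open_disjoint I i (p i) j (p j)).

Definition height (I : instance) (p : placement) : R :=
  fold_right Rmax 0 (map (fun i => snd (p i) + ht I i) (seq 0 (n I))).

Definition is_opt_height (I : instance) (h : R) : Prop :=
  (exists p, feasible I p /\ height I p = h) /\
  (forall p, feasible I p -> h <= height I p).

Definition ordering (I : instance) (o : list nat) : Prop :=
  Permutation o (seq 0 (n I)).

Definition feasible_wrt (I : instance) (p : placement) (placed : list nat)
    (r : nat) (c : R * R) : Prop :=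
  in_strip I r c /\ forall j, In j placed -> open_disjoint I r c j (p j).

Definition lex_yx_le (c d : R * R) : Prop :=
  snd c < snd d \/ (snd c = snd d /\ fst c <= fst d).

Definition is_BL_packing (I : instance) (o : list nat) (p : placement) : Prop :=
  forall m, (m < length o)%nat ->
    let r := nth m o 0%nat in
    let prev := firstn m o in
    feasible_wrt I p prev r (p r) /\
    forall c, feasible_wrt I p prev r c -> lex_yx_le (p r) c.

Definition BL_height (I : instance) (o : list nat) (h : R) : Prop :=
  exists p, is_BL_packing I o p /\ height I p = h.

Definition k_neighbor (k : nat) (o o' : list nat) : Prop :=
  Permutation o o' /\
  (length (filter (fun m => negb (Nat.eqb (nth m o 0%nat) (nth m o' 0%nat)))
                  (seq 0 (length o))) <= k)%nat.

Definition improves (I : instance) (o o' : list nat) : Prop :=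
  exists h h', BL_height I o h /\ BL_height I o' h' /\ h' < h.

Definition k_local_opt (I : instance) (k : nat) (o : list nat) : Prop :=
  forall o', k_neighbor k o o' -> ~ improves I o o'.

(** [ls_returns I k o f]: some run of the bottom-left k-local search started
    from ordering [o] stops at the local optimum [f] (the algorithm then
    returns the BL packing of [f]). *)
Inductive ls_returns (I : instance) (k : nat) : list nat -> list nat -> Prop :=
| ls_stop : forall o, k_local_opt I k o -> ls_returns I k o o
| ls_step : forall o o' f, k_neighbor k o o' -> improves I o o' ->
    ls_returns I k o' f -> ls_returns I k o f.

From Stdlib Require Import Reals List Permutation.
From Stdlib Require Import Lra Lia.
Import ListNotations.
Open Scope R_scope.

(* The instance has k + 2 small squares of side 1/(k+3) and k + 2 unit squares, in a strip
   of width k + 2 + 1/(k+3); the unit squares side by side and the small squares stacked in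
   the remaining column give height 1.
   Suppose at most k of the first k + 2 entries of an ordering are unit squares. Its
   bottom-left packing lays the ordering on the floor up to the first square that does not
   fit. Counting widths, that square is a unit square, and the row already holds k + 1 unit
   squares with at least two small squares before the last of them. The small squares of
   the row have total width < 1, so neither a gap between unit squares nor the space left
   at the right end admits a unit square below height 1: the packing has height 2.
   The initial ordering, small squares first, has this property, and so has every ordering
   differing from it in at most k positions; so the local search stops at once, at twice
   the optimum. *)

Lemma open_disjoint_of_separated I i ci j cj :
  fst ci + wd I i <= fst cj \/ fst cj + wd I j <= fst ci \/
  snd ci + ht I i <= snd cj \/ snd cj + ht I j <= snd ci ->
  open_disjoint I i ci j cj.
Proof. intros Hsep (a & b & Hab). lra. Qed.

Lemma open_disjoint_overlap_false I i ci j cj :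
  0 < wd I i -> 0 < ht I i -> 0 < wd I j -> 0 < ht I j ->
  fst ci < fst cj + wd I j -> fst cj < fst ci + wd I i ->
  snd ci < snd cj + ht I j -> snd cj < snd ci + ht I i ->
  open_disjoint I i ci j cj -> False.
Proof.
  intros Hwi Hhi Hwj Hhj Hx1 Hx2 Hy1 Hy2 Hdisj. apply Hdisj.
  (* the centre of the intersection of the two closed rectangles *)
  exists ((Rmax (fst ci) (fst cj) + Rmin (fst ci + wd I i) (fst cj + wd I j)) / 2).
  exists ((Rmax (snd ci) (snd cj) + Rmin (snd ci + ht I i) (snd cj + ht I j)) / 2).
  unfold Rmax, Rmin.
  destruct (Rle_dec (fst ci) (fst cj)), (Rle_dec (fst ci + wd I i) (fst cj + wd I j)),
    (Rle_dec (snd ci) (snd cj)), (Rle_dec (snd ci + ht I i) (snd cj + ht I j));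
    repeat split; lra.
Qed.

Lemma lex_yx_le_antisym c d : lex_yx_le c d -> lex_yx_le d c -> c = d.
Proof.
  destruct c as [cx cy], d as [dx dy]; unfold lex_yx_le; simpl; intros H1 H2.
  f_equal; lra.
Qed.

Lemma firstn_length_app {A} (l r : list A) : firstn (length l) (l ++ r) = l.
Proof. now rewrite firstn_app, Nat.sub_diag, firstn_all, app_nil_r. Qed.

Lemma fold_Rmax_ge l x : In x l -> x <= fold_right Rmax 0 l.
Proof.
  induction l as [|y l IH]; simpl; [tauto|].
  intros [<- | Hx]; [apply Rmax_l|].
  eapply Rle_trans; [apply IH, Hx | apply Rmax_r].
Qed.

Lemma fold_Rmax_le l B : 0 <= B -> (forall x, In x l -> x <= B) -> fold_right Rmax 0 l <= B.
Proof.
  intros HB; induction l as [|y l IH]; simpl; intros H; [exact HB|].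
  apply Rmax_lub; auto.
Qed.

Lemma height_ge I p i : (i < n I)%nat -> snd (p i) + ht I i <= height I p.
Proof.
  intros Hi; apply fold_Rmax_ge, in_map_iff.
  exists i; split; [reflexivity | apply in_seq; lia].
Qed.

Lemma height_le I p B : 0 <= B ->
  (forall i, (i < n I)%nat -> snd (p i) + ht I i <= B) -> height I p <= B.
Proof.
  intros HB H; apply fold_Rmax_le; [exact HB|].
  intros x (i & <- & Hi)%in_map_iff. apply in_seq in Hi. apply H; lia.
Qed.

Section Rows.

Variable I : instance.

Fixpoint row_width (l : list nat) : R :=
  match l with
  | [] => 0
  | i :: l' => wd I i + row_width l'
  end.

Fixpoint in_row (p : placement) (s : R) (l : list nat) : Prop :=
  match l with
  | [] => True
  | i :: l' => p i = (s, 0) /\ in_row p (s + wd I i) l'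
  end.

Lemma row_width_app l1 l2 : row_width (l1 ++ l2) = row_width l1 + row_width l2.
Proof. induction l1 as [|i l1 IH]; simpl; [lra | rewrite IH; lra]. Qed.

Lemma row_width_perm l l' : Permutation l l' -> row_width l = row_width l'.
Proof. induction 1; simpl; lra. Qed.

Lemma in_row_app p s l1 l2 :
  in_row p s (l1 ++ l2) <-> in_row p s l1 /\ in_row p (s + row_width l1) l2.
Proof.
  revert s; induction l1 as [|i l1 IH]; intros s; simpl.
  - rewrite Rplus_0_r; tauto.
  - rewrite IH, Rplus_assoc; tauto.
Qed.

Lemma row_overflow_split o B : 0 <= B -> B < row_width o ->
  exists l q rest, o = l ++ q :: rest /\ row_width l <= B < row_width l + wd I q.
Proof.
  revert B; induction o as [|i o IH]; simpl; intros B HB Hover; [lra|].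
  destruct (Rlt_le_dec B (wd I i)) as [Hi | Hi].
  - exists [], i, o; simpl; split; [reflexivity | lra].
  - destruct (IH (B - wd I i)) as (l & q & rest & -> & Hl); [lra | lra |].
    exists (i :: l), q, rest; simpl; split; [reflexivity | lra].
Qed.

Lemma feasible_wrt_incl p prev prev' r c :
  incl prev' prev -> feasible_wrt I p prev r c -> feasible_wrt I p prev' r c.
Proof. intros Hincl [Hstrip Hdisj]; split; auto. Qed.

Hypothesis wd_pos : forall i, 0 < wd I i.
Hypothesis ht_pos : forall i, 0 < ht I i.

Lemma row_width_nonneg l : 0 <= row_width l.
Proof. induction l as [|i l IH]; simpl; [lra | pose proof (wd_pos i); lra]. Qed.

Lemma in_row_bounds p s l j : in_row p s l -> In j l ->
  snd (p j) = 0 /\ s <= fst (p j) /\ fst (p j) + wd I j <= s + row_width l.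
Proof.
  revert s; induction l as [|i l IH]; simpl; intros s Hrow Hj; [contradiction|].
  destruct Hrow as [Hi Hrow]. pose proof (wd_pos i); pose proof (row_width_nonneg l).
  destruct Hj as [<- | Hj].
  - rewrite Hi; simpl; lra.
  - destruct (IH _ Hrow Hj); lra.
Qed.

Lemma in_row_cover p s l x : in_row p s l -> s <= x < s + row_width l ->
  exists j, In j l /\ snd (p j) = 0 /\ fst (p j) <= x < fst (p j) + wd I j.
Proof.
  revert s; induction l as [|i l IH]; simpl; intros s Hrow Hx; [lra|].
  destruct Hrow as [Hi Hrow].
  destruct (Rlt_le_dec x (s + wd I i)).
  - exists i; rewrite Hi; simpl; repeat split; auto; lra.
  - destruct (IH _ Hrow) as (j & Hj & Hjx); [lra|].
    exists j; auto.
Qed.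

Lemma row_extend_BL p l r : in_row p 0 l -> row_width l + wd I r <= W I ->
  feasible_wrt I p l r (row_width l, 0) /\
  forall c, feasible_wrt I p l r c -> lex_yx_le (row_width l, 0) c.
Proof.
  intros Hrow Hfit. pose proof (row_width_nonneg l). split.
  - split; [unfold in_strip; simpl; lra|].
    intros j Hj. destruct (in_row_bounds p 0 l j Hrow Hj) as (_ & _ & Hj_right).
    apply open_disjoint_of_separated; simpl; lra.
  - intros [cx cy] [(Hcx & _ & Hcy) Hdisj]; simpl in *. unfold lex_yx_le; simpl.
    destruct (Rlt_le_dec 0 cy); [left; lra | right; split; [lra|]].
    destruct (Rle_lt_dec (row_width l) cx) as [|Hcx']; [assumption | exfalso].
    destruct (in_row_cover p 0 l cx Hrow) as (j & Hj & Hj0 & Hjx); [lra|].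
    pose proof (wd_pos r); pose proof (ht_pos r); pose proof (ht_pos j).
    apply (open_disjoint_overlap_false I r (cx, cy) j (p j)); simpl; auto; lra.
Qed.

Lemma BL_row_prefix p l r : is_BL_packing I (l ++ r) p -> row_width l <= W I -> in_row p 0 l.
Proof.
  revert r; induction l as [|q l IH] using rev_ind; intros r Hp Hfit; [simpl; trivial|].
  rewrite row_width_app in Hfit; simpl in Hfit.
  rewrite <- app_assoc in Hp; simpl in Hp.
  pose proof (wd_pos q).
  assert (Hl : in_row p 0 l) by (apply (IH (q :: r)); [exact Hp | lra]).
  apply in_row_app; split; [exact Hl|]; simpl; split; [|trivial].
  destruct (Hp (length l)) as [Hfeas Hmin]; [rewrite length_app; simpl; lia|].
  cbv zeta in Hfeas, Hmin; rewrite nth_middle, firstn_length_app in Hfeas, Hmin.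
  destruct (row_extend_BL p l q Hl) as [Hfeas' Hmin']; [lra|].
  rewrite Rplus_0_l; apply lex_yx_le_antisym; auto.
Qed.

Section UnitSquares.

Variable big : nat -> bool.
Hypothesis big_unit : forall i, big i = true -> wd I i = 1 /\ ht I i = 1.

Definition small_width (l : list nat) : R := row_width (filter (fun i => negb (big i)) l).

Lemma small_width_nonneg l : 0 <= small_width l.
Proof. apply row_width_nonneg. Qed.

(* Consecutive unit squares of the row start less than 2 apart, since the small rectangles
   between them have total width < 1. *)
Lemma units_cover_row p s l j x :
  in_row p s (l ++ [j]) -> big j = true -> small_width l < 1 ->
  s + small_width l - 1 < x < s + row_width l + 1 ->
  exists u, In u (l ++ [j]) /\ big u = true /\ fst (p u) - 1 < x < fst (p u) + 1.
Proof.
  revert s; induction l as [|i l IH]; intros s Hrow Hj Hsmall Hx.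
  - destruct Hrow as [Hpj _]. exists j; rewrite Hpj; simpl in *.
    unfold small_width in Hx; simpl in Hx. repeat split; auto; lra.
  - destruct Hrow as [Hpi Hrow]. simpl in Hx.
    pose proof (small_width_nonneg l).
    unfold small_width in Hsmall, Hx; simpl in Hsmall, Hx.
    destruct (big i) eqn:Hi; simpl in Hsmall, Hx; fold (small_width l) in Hsmall, Hx.
    + destruct (Rlt_le_dec x (s + 1)).
      * exists i; rewrite Hpi; simpl; repeat split; auto; lra.
      * rewrite (proj1 (big_unit i Hi)) in Hrow, Hx.
        destruct (IH (s + 1) Hrow Hj Hsmall) as (u & Hu & Hbu & Hux); [lra|].
        exists u; simpl; auto.
    + pose proof (wd_pos i).
      destruct (IH (s + wd I i) Hrow Hj) as (u & Hu & Hbu & Hux); [lra | lra |].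
      exists u; simpl; auto.
Qed.

Lemma unit_blocked_by_row p l j q c :
  in_row p 0 (l ++ [j]) -> big j = true -> small_width l < 1 ->
  W I - 1 < row_width l + 1 -> big q = true ->
  feasible_wrt I p (l ++ [j]) q c -> 1 <= snd c.
Proof.
  intros Hrow Hj Hsmall HW Hq [(Hcx & Hcw & Hcy) Hdisj].
  destruct (big_unit q Hq) as [Hwq Hhq].
  destruct (Rle_lt_dec 1 (snd c)) as [|Hlow]; [assumption | exfalso].
  pose proof (small_width_nonneg l).
  destruct (units_cover_row p 0 l j (fst c) Hrow Hj Hsmall) as (u & Hu & Hbu & Hux); [lra|].
  destruct (big_unit u Hbu) as [Hwu Hhu].
  destruct (in_row_bounds p 0 _ u Hrow Hu) as (Hyu & _).
  apply (open_disjoint_overlap_false I q c u (p u)); try lra.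
  exact (Hdisj u Hu).
Qed.

End UnitSquares.

End Rows.

Lemma INR_lt_plus_1 a b : (a < b)%nat -> INR a + 1 <= INR b.
Proof. intros Hab; rewrite <- S_INR; apply le_INR; lia. Qed.

Lemma filter_length_perm {A} (f : A -> bool) l l' :
  Permutation l l' -> length (filter f l) = length (filter f l').
Proof. induction 1; simpl; repeat destruct (f _); simpl; lia. Qed.

Lemma filter_length_impl {A} (f g : A -> bool) l :
  (forall x, In x l -> f x = true -> g x = true) ->
  (length (filter f l) <= length (filter g l))%nat.
Proof.
  induction l as [|x l IH]; simpl; intros H; [lia|].
  specialize (IH (fun y Hy => H y (or_intror Hy))).
  destruct (f x) eqn:Hf; [rewrite (H x (or_introl eq_refl) Hf); simpl; lia|].
  destruct (g x); simpl; lia.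
Qed.

Lemma split_last_sat {A} (f : A -> bool) l : filter f l <> [] ->
  exists l1 x l2, l = l1 ++ x :: l2 /\ f x = true /\ filter f l2 = [].
Proof.
  induction l as [|a l IH]; simpl; intros Hl; [congruence|].
  destruct (filter f l) as [|b fl] eqn:Hfl.
  - destruct (f a) eqn:Ha; [|congruence].
    exists [], a, l; auto.
  - destruct IH as (l1 & x & l2 & -> & Hx & Hl2); [congruence|].
    exists (a :: l1), x, l2; auto.
Qed.

Lemma firstn_seq m s len : (m <= len)%nat -> firstn m (seq s len) = seq s m.
Proof.
  intros Hm; replace len with (m + (len - m))%nat by lia.
  rewrite seq_app, <- (length_seq m s) at 1; apply firstn_length_app.
Qed.

Lemma firstn_as_map_nth (l : list nat) m : (m <= length l)%nat ->
  firstn m l = map (fun i => nth i l 0%nat) (seq 0 m).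
Proof.
  revert m; induction l as [|x l IH]; intros m Hm; destruct m; simpl in *; auto; try lia.
  f_equal. rewrite IH by lia. now rewrite <- seq_shift, map_map.
Qed.

Section Construction.

Variable k : nat.

Definition nsmall : nat := (k + 2)%nat.
Definition side : R := / (INR k + 3).
Definition is_unit (i : nat) : bool := (nsmall <=? i)%nat.
Definition square_side (i : nat) : R := if is_unit i then 1 else side.

Definition worst_instance : instance :=
  mkInstance (INR nsmall + side) (2 * nsmall) square_side square_side.

Local Notation I := worst_instance.

Lemma INR_nsmall : INR nsmall = INR k + 2.
Proof. unfold nsmall; rewrite plus_INR; simpl; lra. Qed.

Lemma side_pos : 0 < side.
Proof. unfold side; apply Rinv_0_lt_compat; pose proof (pos_INR k); lra. Qed.

Lemma nsmall_side_lt_1 : INR nsmall * side < 1.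
Proof.
  rewrite INR_nsmall; unfold side; pose proof (pos_INR k).
  apply (Rmult_lt_reg_r (INR k + 3)); [lra|].
  rewrite Rmult_assoc, Rinv_l by lra; lra.
Qed.

Lemma side_lt_nsmall_side : side < INR nsmall * side.
Proof. rewrite INR_nsmall; pose proof (pos_INR k); pose proof side_pos; nra. Qed.

Lemma square_pos i : 0 < square_side i.
Proof. unfold square_side; destruct (is_unit i); [lra | apply side_pos]. Qed.

Lemma square_le_1 i : square_side i <= 1.
Proof.
  pose proof side_lt_nsmall_side; pose proof nsmall_side_lt_1.
  unfold square_side; destruct (is_unit i); lra.
Qed.

Lemma unit_square i : is_unit i = true -> wd I i = 1 /\ ht I i = 1.
Proof. intros Hi; simpl; unfold square_side; rewrite Hi; auto. Qed.

Lemma small_square i : is_unit i = false -> wd I i = side.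
Proof. intros Hi; simpl; unfold square_side; rewrite Hi; auto. Qed.

Definition nunits (l : list nat) : nat := length (filter is_unit l).
Definition nsmalls (l : list nat) : nat := length (filter (fun i => negb (is_unit i)) l).

Lemma nunits_app l1 l2 : nunits (l1 ++ l2) = (nunits l1 + nunits l2)%nat.
Proof. unfold nunits; now rewrite filter_app, length_app. Qed.

Lemma nsmalls_app l1 l2 : nsmalls (l1 ++ l2) = (nsmalls l1 + nsmalls l2)%nat.
Proof. unfold nsmalls; now rewrite filter_app, length_app. Qed.

Lemma nunits_nsmalls l : (nunits l + nsmalls l)%nat = length l.
Proof. apply filter_length. Qed.

Lemma row_width_counts l : row_width I l = INR (nunits l) + INR (nsmalls l) * side.
Proof.
  unfold nunits, nsmalls; induction l as [|i l IH]; simpl; [lra|].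
  rewrite IH; unfold square_side.
  destruct (is_unit i); cbn [filter length negb]; rewrite ?S_INR; lra.
Qed.

Lemma small_width_counts l : small_width I is_unit l = INR (nsmalls l) * side.
Proof.
  unfold small_width, nsmalls; induction l as [|i l IH]; [simpl; lra|].
  cbn [filter]; destruct (is_unit i) eqn:Hi; cbn [length negb row_width]; [exact IH|].
  rewrite IH, S_INR, (small_square i Hi); lra.
Qed.

Lemma counts_seq_small s j : (s + j <= nsmall)%nat ->
  nunits (seq s j) = 0%nat /\ nsmalls (seq s j) = j.
Proof.
  intros Hj.
  assert (Hsmall : forall i, In i (seq s j) -> is_unit i = false)
    by (intros i Hi%in_seq; apply Nat.leb_gt; lia).
  unfold nunits, nsmalls; split.
  - now rewrite (filter_ext_in _ (fun _ => false) _ Hsmall), filter_false.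
  - rewrite (filter_ext_in _ (fun _ => true)), filter_true, length_seq; [reflexivity|].
    intros i Hi; now rewrite Hsmall.
Qed.

Lemma counts_seq_unit s j : (nsmall <= s)%nat ->
  nunits (seq s j) = j /\ nsmalls (seq s j) = 0%nat.
Proof.
  intros Hs.
  assert (Hunit : forall i, In i (seq s j) -> is_unit i = true)
    by (intros i Hi%in_seq; apply Nat.leb_le; lia).
  unfold nunits, nsmalls; split.
  - now rewrite (filter_ext_in _ (fun _ => true) _ Hunit), filter_true, length_seq.
  - rewrite (filter_ext_in _ (fun _ => false)), filter_false; [reflexivity|].
    intros i Hi; now rewrite Hunit.
Qed.

Lemma counts_seq_prefix j :
  nunits (seq 0 (nsmall + j)) = j /\ nsmalls (seq 0 (nsmall + j)) = nsmall.
Proof.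
  rewrite seq_app, nunits_app, nsmalls_app.
  destruct (counts_seq_small 0 nsmall) as [-> ->]; [lia|].
  destruct (counts_seq_unit (0 + nsmall) j) as [-> ->]; [lia|].
  split; lia.
Qed.

Lemma row_width_seq_prefix j : row_width I (seq 0 (nsmall + j)) = INR j + INR nsmall * side.
Proof. rewrite row_width_counts; now destruct (counts_seq_prefix j) as [-> ->]. Qed.

Lemma seq_all_squares : seq 0 (2 * nsmall) = seq 0 (nsmall + nsmall).
Proof. f_equal; lia. Qed.

Lemma ordering_prefix_counts l rest : Permutation (l ++ rest) (seq 0 (2 * nsmall)) ->
  (nunits l <= nsmall)%nat /\ (nsmalls l <= nsmall)%nat.
Proof.
  intros Hperm.
  pose proof (filter_length_perm is_unit _ _ Hperm) as Hu.
  pose proof (filter_length_perm (fun i => negb (is_unit i)) _ _ Hperm) as Hs.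
  fold (nunits (l ++ rest)) (nunits (seq 0 (2 * nsmall))) in Hu.
  fold (nsmalls (l ++ rest)) (nsmalls (seq 0 (2 * nsmall))) in Hs.
  rewrite nunits_app, seq_all_squares, (proj1 (counts_seq_prefix nsmall)) in Hu.
  rewrite nsmalls_app, seq_all_squares, (proj2 (counts_seq_prefix nsmall)) in Hs.
  lia.
Qed.

Lemma smalls_width_lt_1 l : (nsmalls l <= nsmall)%nat -> INR (nsmalls l) * side < 1.
Proof.
  intros Hl; apply le_INR in Hl; pose proof side_pos; pose proof nsmall_side_lt_1; nra.
Qed.

Lemma two_smalls_before X Y : (nunits (firstn nsmall (X ++ Y)) <= k)%nat ->
  (k < nunits X)%nat -> (2 <= nsmalls X)%nat.
Proof.
  intros Hfew HX; rewrite firstn_app in Hfew.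
  destruct (Nat.lt_ge_cases (length X) nsmall) as [Hshort | Hlong].
  - rewrite firstn_all2, nunits_app in Hfew by lia; lia.
  - replace (nsmall - length X)%nat with 0%nat in Hfew by lia.
    rewrite app_nil_r in Hfew.
    rewrite <- (firstn_skipn nsmall X), nsmalls_app.
    pose proof (nunits_nsmalls (firstn nsmall X)) as Hsplit.
    rewrite length_firstn in Hsplit. unfold nsmall in *; lia.
Qed.

Lemma W_worst : W I = INR nsmall + side.
Proof. reflexivity. Qed.

Lemma overflow_is_unit l q rest :
  Permutation (l ++ q :: rest) (seq 0 (2 * nsmall)) ->
  (nunits (firstn nsmall (l ++ q :: rest)) <= k)%nat ->
  row_width I l <= W I -> W I < row_width I l + wd I q -> is_unit q = true.
Proof.
  intros Hperm Hfew Hfit Hover.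
  destruct (is_unit q) eqn:Hq; [reflexivity | exfalso].
  destruct (ordering_prefix_counts l (q :: rest) Hperm) as [_ Hs].
  pose proof (smalls_width_lt_1 l Hs).
  rewrite W_worst, row_width_counts, (small_square q Hq) in *.
  assert (Hunits : (nsmall <= nunits l)%nat).
  { destruct (Nat.le_gt_cases nsmall (nunits l)) as [|Hlt]; [assumption|].
    apply le_INR in Hlt; rewrite S_INR in Hlt; lra. }
  assert (Hsmalls : (2 <= nsmalls l)%nat)
    by (apply (two_smalls_before l (q :: rest)); unfold nsmall in *; lia).
  apply le_INR in Hunits, Hsmalls; simpl in Hsmalls.
  pose proof side_pos; nra.
Qed.

Lemma overflow_row_units l q rest :
  Permutation (l ++ q :: rest) (seq 0 (2 * nsmall)) ->
  W I < row_width I l + wd I q -> is_unit q = true -> nunits l = S k.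
Proof.
  intros Hperm Hover Hq.
  change (l ++ q :: rest) with (l ++ [q] ++ rest) in Hperm; rewrite app_assoc in Hperm.
  destruct (ordering_prefix_counts _ _ Hperm) as [Hu Hs].
  rewrite nunits_app in Hu; rewrite nsmalls_app in Hs.
  unfold nunits at 2 in Hu; simpl in Hu, Hs; rewrite Hq in Hu; simpl in Hu.
  pose proof (smalls_width_lt_1 l ltac:(lia)).
  rewrite W_worst, row_width_counts, (proj1 (unit_square q Hq)), INR_nsmall in Hover.
  enough (k < nunits l)%nat by (unfold nsmall in Hu; lia).
  destruct (Nat.lt_ge_cases k (nunits l)) as [|Hle]; [assumption|].
  apply le_INR in Hle; pose proof side_pos; lra.
Qed.

Lemma overflow_unit_blocked p l q rest c :
  Permutation (l ++ q :: rest) (seq 0 (2 * nsmall)) ->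
  (nunits (firstn nsmall (l ++ q :: rest)) <= k)%nat ->
  in_row I p 0 l -> W I < row_width I l + wd I q -> is_unit q = true ->
  feasible_wrt I p l q c -> 1 <= snd c.
Proof.
  intros Hperm Hfew Hrow Hover Hq Hfeas.
  pose proof (overflow_row_units l q rest Hperm Hover Hq) as Hunits.
  destruct (ordering_prefix_counts l (q :: rest) Hperm) as [_ Hs].
  (* Cut the row after its last unit square [j]: the part before [j] holds the other [k]
     unit squares and at least two small ones, so it reaches beyond [W - 2]. *)
  destruct (split_last_sat is_unit l) as (l1 & j & l2 & Hl & Hj & Hl2).
  { intros Hnil; unfold nunits in Hunits; rewrite Hnil in Hunits; discriminate. }
  assert (Hl' : l = (l1 ++ [j]) ++ l2) by (rewrite <- app_assoc; exact Hl).
  assert (Hl2_units : nunits l2 = 0%nat) by (unfold nunits; now rewrite Hl2).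
  assert (Hj_counts : nunits [j] = 1%nat /\ nsmalls [j] = 0%nat)
    by (unfold nunits, nsmalls; simpl; now rewrite Hj).
  assert (Hunits1 : nunits l1 = k) by (rewrite Hl', !nunits_app in Hunits; lia).
  assert (Hsmalls1 : (2 <= nsmalls l1)%nat).
  { enough (2 <= nsmalls (l1 ++ [j]))%nat by (rewrite nsmalls_app in *; lia).
    apply (two_smalls_before _ (l2 ++ q :: rest)).
    - rewrite app_assoc, <- Hl'; exact Hfew.
    - rewrite nunits_app; lia. }
  assert (Hnsmalls1 : (nsmalls l1 <= nsmalls l)%nat) by (rewrite Hl, nsmalls_app; lia).
  rewrite Hl' in Hrow, Hfeas; apply in_row_app in Hrow as [Hrow _].
  apply (unit_blocked_by_row I square_pos is_unit unit_square p l1 j q c Hrow Hj); auto.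
  - rewrite small_width_counts; apply smalls_width_lt_1; lia.
  - rewrite W_worst, row_width_counts, INR_nsmall, Hunits1.
    apply le_INR in Hsmalls1; simpl in Hsmalls1; pose proof side_pos; nra.
  - eapply feasible_wrt_incl; [|exact Hfeas]. intros x Hx; apply in_or_app; left; exact Hx.
Qed.

Lemma BL_height_ge_2 o p : Permutation o (seq 0 (2 * nsmall)) -> is_BL_packing I o p ->
  (nunits (firstn nsmall o) <= k)%nat -> 2 <= height I p.
Proof.
  intros Hperm Hp Hfew.
  destruct (row_overflow_split I o (W I)) as (l & q & rest & -> & Hfit & Hover).
  - rewrite W_worst; pose proof side_pos; pose proof (pos_INR nsmall); lra.
  - rewrite (row_width_perm I _ _ Hperm), seq_all_squares, row_width_seq_prefix, W_worst.
    pose proof side_lt_nsmall_side; lra.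
  - pose proof (BL_row_prefix I square_pos square_pos p l _ Hp Hfit) as Hrow.
    pose proof (overflow_is_unit l q rest Hperm Hfew Hfit Hover) as Hq.
    destruct (Hp (length l)) as [Hfeas _]; [rewrite length_app; simpl; lia|].
    cbv zeta in Hfeas; rewrite nth_middle, firstn_length_app in Hfeas.
    pose proof (overflow_unit_blocked p l q rest _ Hperm Hfew Hrow Hover Hq Hfeas).
    assert (Hq_range : (q < n I)%nat).
    { apply (Permutation_in q), in_seq in Hperm; [simpl; lia | apply in_elt]. }
    pose proof (height_ge I p q Hq_range).
    rewrite (proj2 (unit_square q Hq)) in *; lra.
Qed.

Definition initial_order : list nat := seq 0 (2 * nsmall).

Definition last_square : nat := (nsmall + S k)%nat.

Lemma last_square_unit : is_unit last_square = true.
Proof. apply Nat.leb_le; unfold last_square; lia. Qed.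

Lemma initial_order_split : initial_order = seq 0 last_square ++ [last_square].
Proof.
  unfold initial_order, last_square.
  replace (2 * nsmall)%nat with (S (nsmall + S k)) by (unfold nsmall; lia).
  exact (seq_S (nsmall + S k) 0).
Qed.

Lemma row_before_last_fits : row_width I (seq 0 last_square) <= W I.
Proof.
  pose proof nsmall_side_lt_1; pose proof side_pos.
  unfold last_square; rewrite row_width_seq_prefix, W_worst, S_INR, INR_nsmall in *; lra.
Qed.

Lemma last_square_on_top p : in_row I p 0 (seq 0 last_square) ->
  feasible_wrt I p (seq 0 last_square) last_square (0, 1).
Proof.
  intros Hrow; split.
  - unfold in_strip; rewrite (proj1 (unit_square _ last_square_unit)), W_worst, INR_nsmall.
    simpl; pose proof (pos_INR k); pose proof side_pos; lra.
  - intros j Hj; destruct (in_row_bounds I square_pos p 0 _ j Hrow Hj) as [Hyj _].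
    apply open_disjoint_of_separated; simpl; rewrite Hyj.
    pose proof (square_le_1 j); lra.
Qed.

Lemma last_square_blocked p c : in_row I p 0 (seq 0 last_square) ->
  feasible_wrt I p (seq 0 last_square) last_square c -> 1 <= snd c.
Proof.
  unfold last_square; rewrite Nat.add_succ_r, seq_S; intros Hrow.
  apply (unit_blocked_by_row I square_pos is_unit unit_square p _ _ _ c Hrow).
  - apply Nat.leb_le; lia.
  - rewrite small_width_counts, (proj2 (counts_seq_prefix k)); apply nsmall_side_lt_1.
  - pose proof side_lt_nsmall_side; pose proof INR_nsmall.
    rewrite row_width_seq_prefix, W_worst; lra.
  - apply Nat.leb_le; lia.
Qed.

Lemma initial_order_height p : is_BL_packing I initial_order p -> height I p = 2.
Proof.
  rewrite initial_order_split; intros Hp.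
  pose proof (BL_row_prefix I square_pos square_pos p _ _ Hp row_before_last_fits) as Hrow.
  destruct (Hp (length (seq 0 last_square))) as [Hfeas Hmin].
  { rewrite length_app; simpl; lia. }
  cbv zeta in Hfeas, Hmin; rewrite nth_middle, firstn_length_app in Hfeas, Hmin.
  assert (Hlast : snd (p last_square) = 1).
  { pose proof (last_square_blocked p _ Hrow Hfeas).
    destruct (Hmin _ (last_square_on_top p Hrow)) as [|[]]; simpl in *; lra. }
  pose proof (proj2 (unit_square _ last_square_unit)) as Hht_last.
  assert (Hlast_range : (last_square < n I)%nat) by (simpl; unfold last_square, nsmall; lia).
  apply Rle_antisym.
  - apply height_le; [lra|]; intros i Hi.
    destruct (Nat.eq_dec i last_square) as [-> | Hne]; [lra|].
    assert (Hin : In i (seq 0 last_square))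
      by (apply in_seq; simpl in Hi; unfold last_square, nsmall in *; lia).
    destruct (in_row_bounds I square_pos p 0 _ i Hrow Hin) as [-> _].
    pose proof (square_le_1 i); simpl; lra.
  - pose proof (height_ge I p _ Hlast_range); lra.
Qed.

Definition initial_packing : placement :=
  fun i => if (i <? last_square)%nat then (row_width I (seq 0 i), 0) else (0, 1).

Lemma initial_packing_row j : (j <= last_square)%nat -> in_row I initial_packing 0 (seq 0 j).
Proof.
  induction j as [|j IH]; intros Hj; [simpl; trivial|].
  rewrite seq_S; apply in_row_app; split; [apply IH; lia|].
  simpl; split; [|trivial].
  unfold initial_packing; rewrite (proj2 (Nat.ltb_lt _ _)) by lia; f_equal; lra.
Qed.

Lemma initial_packing_BL : is_BL_packing I initial_order initial_packing.
Proof.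
  intros m Hm; unfold initial_order in *; rewrite length_seq in Hm; cbv zeta.
  rewrite seq_nth, firstn_seq by lia; simpl.
  destruct (Nat.lt_ge_cases m last_square) as [Hlt | Hge].
  - assert (Hpos : initial_packing m = (row_width I (seq 0 m), 0))
      by (unfold initial_packing; now rewrite (proj2 (Nat.ltb_lt _ _))).
    rewrite Hpos; apply (row_extend_BL I square_pos square_pos).
    + apply initial_packing_row; lia.
    + eapply Rle_trans; [|exact row_before_last_fits].
      replace last_square with (S m + (last_square - S m))%nat by lia.
      rewrite seq_app, row_width_app, (seq_S m 0), row_width_app; simpl.
      pose proof (row_width_nonneg I square_pos (seq (S m) (last_square - S m))); lra.
  - assert (Hm' : m = last_square) by (unfold last_square, nsmall in *; lia); subst m.
    assert (Hpos : initial_packing last_square = (0, 1))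
      by (unfold initial_packing; now rewrite Nat.ltb_irrefl).
    rewrite Hpos; pose proof (initial_packing_row last_square (le_n _)) as Hrow.
    split; [exact (last_square_on_top _ Hrow)|].
    intros c Hc; pose proof (last_square_blocked _ _ Hrow Hc).
    destruct Hc as [(Hcx & _) _]; unfold lex_yx_le; simpl.
    destruct (Rlt_le_dec 1 (snd c)); [left | right]; lra.
Qed.

Definition optimal_packing : placement :=
  fun i => if is_unit i then (INR (i - nsmall), 0) else (INR nsmall, INR i * side).

Lemma optimal_packing_feasible : feasible I optimal_packing.
Proof.
  pose proof side_pos.
  split.
  - intros i Hi; simpl in Hi; unfold in_strip, optimal_packing; simpl; unfold square_side.
    destruct (is_unit i) eqn:Hu; simpl.
    + apply Nat.leb_le in Hu.
      pose proof (pos_INR (i - nsmall)).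
      pose proof (INR_lt_plus_1 (i - nsmall) nsmall ltac:(lia)).
      repeat split; lra.
    + pose proof (pos_INR nsmall); pose proof (pos_INR i).
      repeat split; [lra | lra | nra].
  - intros i j Hi Hj Hij; simpl in Hi, Hj.
    apply open_disjoint_of_separated; unfold optimal_packing; simpl; unfold square_side.
    destruct (is_unit i) eqn:Hui, (is_unit j) eqn:Huj; simpl; unfold is_unit in *;
      [apply Nat.leb_le in Hui; apply Nat.leb_le in Huj
      | apply Nat.leb_le in Hui; apply Nat.leb_gt in Huj
      | apply Nat.leb_gt in Hui; apply Nat.leb_le in Huj
      | apply Nat.leb_gt in Hui; apply Nat.leb_gt in Huj].
    + assert (Hlt : (i < j \/ j < i)%nat) by lia.
      destruct Hlt; [left | right; left]; apply INR_lt_plus_1; lia.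
    + left; apply INR_lt_plus_1; lia.
    + right; left; apply INR_lt_plus_1; lia.
    + assert (Hlt : (i < j \/ j < i)%nat) by lia.
      destruct Hlt as [Hlt | Hlt]; apply INR_lt_plus_1 in Hlt;
        [right; right; left | right; right; right]; nra.
Qed.

Lemma optimal_height : is_opt_height I 1.
Proof.
  pose proof side_pos; pose proof nsmall_side_lt_1.
  assert (Hfirst_unit : is_unit nsmall = true) by (apply Nat.leb_le; lia).
  assert (Hfirst_range : (nsmall < n I)%nat) by (simpl; unfold nsmall; lia).
  pose proof (proj2 (unit_square _ Hfirst_unit)) as Hht.
  split.
  - exists optimal_packing; split; [exact optimal_packing_feasible|].
    apply Rle_antisym.
    + apply height_le; [lra|]; intros i Hi; simpl in Hi.
      unfold optimal_packing; simpl; unfold square_side.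
      destruct (is_unit i) eqn:Hu; simpl; [lra|].
      apply Nat.leb_gt, INR_lt_plus_1 in Hu; nra.
    + pose proof (height_ge I optimal_packing _ Hfirst_range) as Hge.
      unfold optimal_packing at 1 in Hge; rewrite Hfirst_unit, Hht in Hge; simpl in Hge; lra.
  - intros p [Hstrip _]; destruct (Hstrip _ Hfirst_range) as (_ & _ & Hy).
    pose proof (height_ge I p _ Hfirst_range); lra.
Qed.

(* Each unit square among the first [nsmall] entries of [o'] sits at a position where [o']
   differs from [initial_order]. *)
Lemma neighbor_few_early_units o' : k_neighbor k initial_order o' ->
  (nunits (firstn nsmall o') <= k)%nat.
Proof.
  intros [Hperm Hdiff]; unfold initial_order in *; rewrite length_seq in Hdiff.
  set (differs := fun m => negb (nth m (seq 0 (2 * nsmall)) 0%nat =? nth m o' 0%nat)) in Hdiff.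
  assert (Hlen : length o' = (2 * nsmall)%nat)
    by (rewrite <- (Permutation_length Hperm); apply length_seq).
  rewrite firstn_as_map_nth by lia; unfold nunits; rewrite filter_map_swap, length_map.
  apply Nat.le_trans with (length (filter differs (seq 0 nsmall))).
  - apply filter_length_impl; intros m Hm%in_seq Hunit; unfold differs.
    rewrite seq_nth by lia; apply Bool.negb_true_iff, Nat.eqb_neq.
    intros Heq; rewrite <- Heq in Hunit; apply Nat.leb_le in Hunit; lia.
  - rewrite seq_all_squares, seq_app, filter_app, length_app in Hdiff; lia.
Qed.

Lemma initial_order_local_opt : k_local_opt I k initial_order.
Proof.
  intros o' Hnb (h & h' & (p & Hp & <-) & (p' & Hp' & <-) & Hlt).
  rewrite (initial_order_height p Hp) in Hlt.
  assert (2 <= height I p'); [|lra].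
  apply (BL_height_ge_2 o'); [|exact Hp' | exact (neighbor_few_early_units o' Hnb)].
  destruct Hnb as [Hperm _]; symmetry; exact Hperm.
Qed.

Lemma initial_order_returns_itself f : ls_returns I k initial_order f -> f = initial_order.
Proof.
  intros Hrun; inversion Hrun as [|o o' f' Hnb Himp]; subst; [reflexivity|].
  exfalso; exact (initial_order_local_opt o' Hnb Himp).
Qed.

Lemma worst_instance_valid : valid_instance I.
Proof.
  pose proof side_pos; pose proof (pos_INR k); pose proof INR_nsmall.
  split; [simpl; lra|]; intros i _.
  pose proof (square_pos i); pose proof (square_le_1 i); simpl; repeat split; lra.
Qed.

End Construction.

Theorem theorem5 : forall k : nat,
  exists (I : instance) (o0 : list nat) (hopt : R),
    valid_instance I /\ (0 < n I)%nat /\ all_squares I /\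
    ordering I o0 /\
    is_opt_height I hopt /\
    (exists f, ls_returns I k o0 f) /\
    (forall f, ls_returns I k o0 f ->
       BL_height I f (2 * hopt) /\
       (forall h, BL_height I f h -> h = 2 * hopt)).
Proof.
  intros k; exists (worst_instance k), (initial_order k), 1.
  split; [exact (worst_instance_valid k)|].
  split; [simpl; unfold nsmall; lia|].
  split; [intros i _; reflexivity|].
  split; [apply Permutation_refl|].
  split; [exact (optimal_height k)|].
  split; [exists (initial_order k); apply ls_stop, initial_order_local_opt|].
  intros f Hrun; rewrite (initial_order_returns_itself k f Hrun); split.
  - exists (initial_packing k); split; [exact (initial_packing_BL k)|].
    rewrite (initial_order_height k _ (initial_packing_BL k)); lra.
  - intros h (p & Hp & <-); rewrite (initial_order_height k p Hp); lra.
Qed.
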